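(* Let $F:\mathbb{P}(n)\to\mathbb{P}(n)$, $F(\Sigma)=I*\Sigma$. Then the maximum and minimum eigenvalues of $F(\Sigma)$ are monotone in $\Sigma$: if $\Sigma_1,\Sigma_2\in\mathbb{P}(n)$ with $\Sigma_1\preceq\Sigma_2$, then $\lambda_{\max}(I*\Sigma_1)\le\lambda_{\max}(I*\Sigma_2)$ and $\lambda_{\min}(I*\Sigma_1)\le\lambda_{\min}(I*\Sigma_2)$.
   Context: $\mathbb{P}(n)$ denotes the cone of $n\times n$ positive definite Hermitian matrices and $\preceq$ is the Löwner order ($A\preceq B$ iff $B-A$ is positive semidefinite). For $A,B\in\mathbb{P}(n)$, with $\lambda_{\max},\lambda_{\min}$ the largest and smallest eigenvalues of $BA^{-1}$, define $A*B=\frac{1}{\sqrt{\lambda_{\min}}+\sqrt{\lambda_{\max}}}\left(B+\sqrt{\lambda_{\min}\lambda_{\max}}\,A\right)$. *)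

(* Complex scalars: an arbitrary numClosedFieldType C
   (e.g. algC, or complex R for R : rcfType). *)
From Stdlib Require Import ClassicalEpsilon.
From mathcomp Require Import all_boot all_order all_algebra.
From mathcomp Require Import sesquilinear spectral.
Set Implicit Arguments. Unset Strict Implicit. Unset Printing Implicit Defensive.
Import Order.TTheory GRing.Theory Num.Theory.
Local Open Scope ring_scope.
Local Open Scope sesquilinear_scope.

Definition ctrmx {C : numClosedFieldType} {n : nat} (A : 'M[C]_n) : 'M[C]_n :=
  A ^t*.

Definition hermitian_mx {C : numClosedFieldType} {n : nat} (A : 'M[C]_n) : Prop :=
  ctrmx A = A.

Definition qform {C : numClosedFieldType} {n : nat} (A : 'M[C]_n) (v : 'rV[C]_n) : C :=
  (v *m A *m v ^t*) 0 0.

Definition posdef {C : numClosedFieldType} {n : nat} (A : 'M[C]_n) : Prop :=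
  hermitian_mx A /\ forall v : 'rV[C]_n, v != 0 -> 0 < qform A v.

Definition psd {C : numClosedFieldType} {n : nat} (A : 'M[C]_n) : Prop :=
  hermitian_mx A /\ forall v : 'rV[C]_n, 0 <= qform A v.

Definition loewner_le {C : numClosedFieldType} {n : nat} (A B : 'M[C]_n) : Prop :=
  psd (B - A).

Definition is_lambda_max {C : numClosedFieldType} {n : nat} (M : 'M[C]_n) (l : C) : Prop :=
  eigenvalue M l /\ forall m, eigenvalue M m -> m <= l.
Definition is_lambda_min {C : numClosedFieldType} {n : nat} (M : 'M[C]_n) (l : C) : Prop :=
  eigenvalue M l /\ forall m, eigenvalue M m -> l <= m.

Definition lambda_max {C : numClosedFieldType} {n : nat} (M : 'M[C]_n) : C :=
  epsilon (inhabits 0) (is_lambda_max M).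
Definition lambda_min {C : numClosedFieldType} {n : nat} (M : 'M[C]_n) : C :=
  epsilon (inhabits 0) (is_lambda_min M).

Definition star {C : numClosedFieldType} {n : nat} (A B : 'M[C]_n) : 'M[C]_n :=
  let M := B *m invmx A in
  let lmin := lambda_min M in
  let lmax := lambda_max M in
  (sqrtC lmin + sqrtC lmax)^-1 *: (B + sqrtC (lmin * lmax) *: A).

(* Write c := (sqrt a + sqrt b)^-1, where a and b are the extreme eigenvalues
   of S.  Then I * S = c (S + sqrt(ab) I) has the same eigenvectors as S, and
   its extreme eigenvalues are c (b + sqrt(ab)) = sqrt b and
   c (a + sqrt(ab)) = sqrt a.  So it suffices that the extreme eigenvalues of a
   Hermitian matrix are monotone for the Loewner order, which follows from the
   Rayleigh bounds a |v|^2 <= v S v^* <= b |v|^2 evaluated at an extreme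
   eigenvector. *)
From mathcomp Require Import all_boot all_order all_algebra.
From mathcomp Require Import sesquilinear spectral.
From Stdlib Require Import ClassicalEpsilon.
Set Implicit Arguments. Unset Strict Implicit. Unset Printing Implicit Defensive.
Import Order.TTheory GRing.Theory Num.Theory.
Local Open Scope ring_scope.
Local Open Scope sesquilinear_scope.

Section ExtremeEigenvalues.
Variables (C : numClosedFieldType) (n : nat).
Implicit Types (A B : 'M[C]_n) (v : 'rV[C]_n) (l m : C).

Local Notation "''[' v ]" := (dotmx v v) : ring_scope.

Lemma qform_eigenvector A v m : v *m A = m *: v -> qform A v = m * '[v].
Proof. by move=> vA; rewrite /qform vA -scalemxAl mxE dotmxE. Qed.

Lemma qform_loewner A B v : loewner_le A B -> qform A v <= qform B v.
Proof.
by case=> _ /(_ v); rewrite /qform mulmxBr mulmxBl !mxE subr_ge0.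
Qed.

Lemma eigenvalue_posdef_gt0 A m : posdef A -> eigenvalue A m -> 0 < m.
Proof.
case=> _ Apos /eigenvalueP[v vA v_neq0].
have := Apos v v_neq0; rewrite (qform_eigenvector vA).
by rewrite pmulr_lgt0 // dnorm_gt0.
Qed.

Section Hermitian.
Variable A : 'M[C]_n.
Hypothesis A_herm : hermitian_mx A.
Let P := spectralmx A.
Let d := spectral_diag A.
Let A_ctr : A ^t* = A := A_herm.

Lemma hermitian_spectralE : A = P^t* *m diag_mx d *m P.
Proof.
rewrite -invmx_unitary ?spectral_unitarymx //; apply/orthomx_spectralP.
by apply/normalmxP; rewrite A_ctr.
Qed.

Lemma spectral_diag_real i : d 0 i \is Num.real.
Proof.
suff /hermitian_spectral_diag_real/mxOverP : A \is hermsymmx by [].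
by apply/is_hermitianmxP; rewrite expr0 scale1r A_ctr.
Qed.

Lemma eigenvalue_spectral_diag i : eigenvalue A (d 0 i).
Proof.
have P_unitary : P \is unitarymx := spectral_unitarymx A.
apply/eigenvalueP; exists (delta_mx 0 i *m P).
  rewrite [in LHS]hermitian_spectralE !mulmxA mulmxtVK // mul_mx_diag.
  rewrite scalemxAl; congr (_ *m _); apply/rowP => j.
  by rewrite !mxE eqxx; case: eqP => [->|]; rewrite ?mulr1 ?mul1r ?mulr0 ?mul0r.
rewrite mulmx_free_eq0 ?row_free_unit ?spectral_unit //.
by apply/eqP => /matrixP/(_ 0 i)/eqP; rewrite !mxE !eqxx oner_eq0.
Qed.

Lemma qform_spectral v :
  qform A v = \sum_j d 0 j * `|(v *m P^t*) 0 j| ^+ 2.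
Proof.
have Pv : P *m v^t* = (v *m P^t*)^t* by rewrite trmx_mul map_mxM trmxCK.
rewrite /qform hermitian_spectralE !mulmxA -(mulmxA _ P) Pv mul_mx_diag mxE.
by apply: eq_bigr => j _; rewrite !mxE normCK mulrAC [LHS]mulrC.
Qed.

Lemma dnorm_spectral v : '[v] = \sum_j `|(v *m P^t*) 0 j| ^+ 2.
Proof.
have P_unitary : P \is unitarymx := spectral_unitarymx A.
have Pv : P *m v^t* = (v *m P^t*)^t* by rewrite trmx_mul map_mxM trmxCK.
rewrite dotmxE -{1}(mulmxKtV v P_unitary) // -mulmxA Pv mxE.
by apply: eq_bigr => j _; rewrite !mxE normCK.
Qed.

Lemma qform_le_dnorm b v : (forall i, d 0 i <= b) -> qform A v <= b * '[v].
Proof.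
move=> d_le_b; rewrite qform_spectral dnorm_spectral mulr_sumr.
by apply: ler_sum => j _; rewrite ler_wpM2r ?exprn_ge0.
Qed.

Lemma qform_ge_dnorm a v : (forall i, a <= d 0 i) -> a * '[v] <= qform A v.
Proof.
move=> a_le_d; rewrite qform_spectral dnorm_spectral mulr_sumr.
by apply: ler_sum => j _; rewrite ler_wpM2r ?exprn_ge0.
Qed.

Lemma qform_le_lambda_max l v : is_lambda_max A l -> qform A v <= l * '[v].
Proof.
case=> _ l_max; apply: qform_le_dnorm => i.
exact/l_max/eigenvalue_spectral_diag.
Qed.

Lemma qform_ge_lambda_min l v : is_lambda_min A l -> l * '[v] <= qform A v.
Proof.
case=> _ l_min; apply: qform_ge_dnorm => i.
exact/l_min/eigenvalue_spectral_diag.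
Qed.

Hypothesis n_gt0 : (0 < n)%N.

Lemma ex_lambda_max : exists l, is_lambda_max A l.
Proof.
have [i _ i_max] := @real_arg_maxP _ _ (Ordinal n_gt0) predT (fun i => d 0 i)
  isT (fun i _ => spectral_diag_real i).
exists (d 0 i); split=> [|m /eigenvalueP[v vA v_neq0]].
  exact: eigenvalue_spectral_diag.
rewrite -(ler_pM2r (_ : 0 < '[v])) ?dnorm_gt0 // -(qform_eigenvector vA).
by apply: qform_le_dnorm => j; apply: i_max.
Qed.

Lemma ex_lambda_min : exists l, is_lambda_min A l.
Proof.
have [i _ i_min] := @real_arg_minP _ _ (Ordinal n_gt0) predT (fun i => d 0 i)
  isT (fun i _ => spectral_diag_real i).
exists (d 0 i); split=> [|m /eigenvalueP[v vA v_neq0]].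
  exact: eigenvalue_spectral_diag.
rewrite -(ler_pM2r (_ : 0 < '[v])) ?dnorm_gt0 // -(qform_eigenvector vA).
by apply: qform_ge_dnorm => j; apply: i_min.
Qed.

End Hermitian.

Lemma lambda_max_eq A l : is_lambda_max A l -> lambda_max A = l.
Proof.
move=> l_max; have [l_eig le_l] := l_max.
have [max_eig max_ge] := epsilon_spec (inhabits 0) _ (ex_intro _ l l_max).
by apply/le_anti; rewrite le_l // max_ge.
Qed.

Lemma lambda_min_eq A l : is_lambda_min A l -> lambda_min A = l.
Proof.
move=> l_min; have [l_eig l_le] := l_min.
have [min_eig min_le] := epsilon_spec (inhabits 0) _ (ex_intro _ l l_min).
by apply/le_anti; rewrite l_le // min_le.
Qed.

Lemma lambda_maxP A : (0 < n)%N -> hermitian_mx A ->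
  is_lambda_max A (lambda_max A).
Proof.
move=> n_gt0 A_herm; have [l l_max] := ex_lambda_max A_herm n_gt0.
by rewrite (lambda_max_eq l_max).
Qed.

Lemma lambda_minP A : (0 < n)%N -> hermitian_mx A ->
  is_lambda_min A (lambda_min A).
Proof.
move=> n_gt0 A_herm; have [l l_min] := ex_lambda_min A_herm n_gt0.
by rewrite (lambda_min_eq l_min).
Qed.

Section LoewnerMonotone.
Variables A B : 'M[C]_n.
Hypothesis n_gt0 : (0 < n)%N.
Hypotheses (A_herm : hermitian_mx A) (B_herm : hermitian_mx B).
Hypothesis A_le_B : loewner_le A B.

Lemma lambda_max_loewner : lambda_max A <= lambda_max B.
Proof.
have [/eigenvalueP[v vA v_neq0] _] := lambda_maxP n_gt0 A_herm.
rewrite -(ler_pM2r (_ : 0 < '[v])) ?dnorm_gt0 // -(qform_eigenvector vA).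
exact/(le_trans (qform_loewner v A_le_B))/qform_le_lambda_max/lambda_maxP.
Qed.

Lemma lambda_min_loewner : lambda_min A <= lambda_min B.
Proof.
have [/eigenvalueP[v vB v_neq0] _] := lambda_minP n_gt0 B_herm.
rewrite -(ler_pM2r (_ : 0 < '[v])) ?dnorm_gt0 // -(qform_eigenvector vB).
exact/(le_trans _ (qform_loewner v A_le_B))/qform_ge_lambda_min/lambda_minP.
Qed.

End LoewnerMonotone.

Section ScaleShift.
Variables (A : 'M[C]_n) (c s : C).

Lemma eigenvalue_scale_shift m : c != 0 ->
  eigenvalue (c *: (A + s *: 1%:M)) m = eigenvalue A (m / c - s).
Proof.
move=> c_neq0.
have shiftE v : v *m (c *: (A + s *: 1%:M)) = c *: (v *m A + s *: v).
  by rewrite -scalemxAr mulmxDr -scalemxAr mulmx1.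
apply/eigenvalueP/eigenvalueP => -[v vA v_neq0]; exists v => //.
  rewrite scalerBl [m / c]mulrC -scalerA -vA shiftE.
  by rewrite scalerA mulVf // scale1r addrK.
by rewrite shiftE vA -scalerDl subrK scalerA mulrC divfK.
Qed.

Hypothesis c_gt0 : 0 < c.
Let c_neq0 : c != 0 := lt0r_neq0 c_gt0.

Lemma is_lambda_max_scale_shift l :
  is_lambda_max A l -> is_lambda_max (c *: (A + s *: 1%:M)) (c * (l + s)).
Proof.
case=> l_eig l_max; split=> [|m].
  by rewrite eigenvalue_scale_shift // [c * _]mulrC mulfK // addrK.
rewrite eigenvalue_scale_shift // => /l_max.
by rewrite lerBlDr -(ler_pM2l c_gt0) mulrC divfK.
Qed.

Lemma is_lambda_min_scale_shift l :
  is_lambda_min A l -> is_lambda_min (c *: (A + s *: 1%:M)) (c * (l + s)).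
Proof.
case=> l_eig l_min; split=> [|m].
  by rewrite eigenvalue_scale_shift // [c * _]mulrC mulfK // addrK.
rewrite eigenvalue_scale_shift // => /l_min.
by rewrite lerBrDr -(ler_pM2l c_gt0) [X in _ <= X]mulrC divfK.
Qed.

End ScaleShift.

Lemma lambda_max_posdef_gt0 A : (0 < n)%N -> posdef A -> 0 < lambda_max A.
Proof.
move=> n_gt0 A_pd; apply: (eigenvalue_posdef_gt0 A_pd).
by case: (lambda_maxP n_gt0 A_pd.1).
Qed.

Lemma lambda_min_posdef_gt0 A : (0 < n)%N -> posdef A -> 0 < lambda_min A.
Proof.
move=> n_gt0 A_pd; apply: (eigenvalue_posdef_gt0 A_pd).
by case: (lambda_minP n_gt0 A_pd.1).
Qed.

Lemma sqrtC_ratio_shift (a b : C) : 0 < a -> 0 <= b ->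
  (sqrtC a + sqrtC b)^-1 * (b + sqrtC (a * b)) = sqrtC b.
Proof.
move=> a_gt0 b_ge0; rewrite sqrtCM ?nnegrE ?(ltW a_gt0) //.
set x := sqrtC a; set y := sqrtC b; have -> : b = y ^+ 2 by rewrite sqrtCK.
rewrite expr2 -mulrDl [y + x]addrC mulKf // gt_eqF // ltr_wpDr ?sqrtC_ge0 //.
by rewrite /x sqrtC_gt0.
Qed.

Section StarIdentity.
Variable S : 'M[C]_n.
Hypotheses (n_gt0 : (0 < n)%N) (S_pd : posdef S).
Let a := lambda_min S.
Let b := lambda_max S.
Let a_gt0 : 0 < a := lambda_min_posdef_gt0 n_gt0 S_pd.
Let b_gt0 : 0 < b := lambda_max_posdef_gt0 n_gt0 S_pd.

Let star1E :
  star 1%:M S = (sqrtC a + sqrtC b)^-1 *: (S + sqrtC (a * b) *: 1%:M).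
Proof. by rewrite /star invmx1 mulmx1. Qed.

Let c_gt0 : 0 < (sqrtC a + sqrtC b)^-1.
Proof. by rewrite invr_gt0 ltr_wpDr ?sqrtC_ge0 ?sqrtC_gt0 ?ltW. Qed.

Lemma lambda_max_star1 : lambda_max (star 1%:M S) = sqrtC (lambda_max S).
Proof.
have [S_herm _] := S_pd; have b_max := lambda_maxP n_gt0 S_herm.
rewrite star1E (lambda_max_eq (is_lambda_max_scale_shift _ c_gt0 b_max)).
exact: sqrtC_ratio_shift (ltW b_gt0).
Qed.

Lemma lambda_min_star1 : lambda_min (star 1%:M S) = sqrtC (lambda_min S).
Proof.
have [S_herm _] := S_pd; have a_min := lambda_minP n_gt0 S_herm.
rewrite star1E (lambda_min_eq (is_lambda_min_scale_shift _ c_gt0 a_min)).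
rewrite [sqrtC a + _]addrC [a * b]mulrC; exact: sqrtC_ratio_shift (ltW a_gt0).
Qed.

End StarIdentity.

End ExtremeEigenvalues.

Theorem proposition4 (C : numClosedFieldType) (n : nat) (n_gt0 : (0 < n)%N)
  (S1 S2 : 'M[C]_n) :
  posdef S1 -> posdef S2 -> loewner_le S1 S2 ->
  lambda_max (star 1%:M S1) <= lambda_max (star 1%:M S2) /\
  lambda_min (star 1%:M S1) <= lambda_min (star 1%:M S2).
Proof.
move=> S1_pd S2_pd S1_le_S2.
have nneg_max (S : 'M[C]_n) : posdef S -> lambda_max S \is Num.nneg.
  by move=> S_pd; rewrite qualifE /=; apply/ltW/lambda_max_posdef_gt0.
have nneg_min (S : 'M[C]_n) : posdef S -> lambda_min S \is Num.nneg.
  by move=> S_pd; rewrite qualifE /=; apply/ltW/lambda_min_posdef_gt0.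
rewrite !lambda_max_star1 ?lambda_min_star1 //.
split; rewrite ler_sqrtC ?nneg_max ?nneg_min //.
  exact: lambda_max_loewner S1_pd.1 S2_pd.1 S1_le_S2.
exact: lambda_min_loewner S1_pd.1 S2_pd.1 S1_le_S2.
Qed.
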